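(* Let $N, s \in \mathbb{N}$ with $\gcd(N, s) = 1$, let $s'$ be the unique integer in $[1,N-1]$ with $s s'\equiv 1 \pmod N$, let $H<P$ be natural numbers, let $\tilde{P}$ be the unique integer in $[0,s-1]$ with $\tilde P\equiv P \pmod s$, and let $g(x)=x+c\in\mathbb{Z}[x]$ where $c$ is the unique integer in $[0,N-1]$ congruent to $s' + s'(P - \tilde{P})$ modulo $N$. Let $r,m,d \in \mathbb{N}$ be arbitrary, and define $f_0, \dots, f_{d-1} \in \mathbb{Z}[x]$ by \[ f_i(x) = \begin{cases} N^{m - \lfloor i/r \rfloor}g(x)^i, & 0 \le i < rm, \\ g(x)^i, & rm \le i < d. \end{cases} \] Let $p_0 \in [P-H, P+H]$ be an integer with $p_0>1$, $p_0^r\mid N$ and $p_0\equiv 1 \pmod s$; write $p_0=sx_0+1$ and let $x' = x_0 - \frac{P - \tilde{P}}{s}$. Then $p_0^{rm} \mid f_i(x')$ for all $0 \leq i < d$. *)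

From mathcomp Require Import all_boot all_order all_algebra.
Set Implicit Arguments. Unset Strict Implicit. Unset Printing Implicit Defensive.
Import Order.TTheory GRing.Theory Num.Theory.
Local Open Scope ring_scope.

Definition gpoly (c : int) : {poly int} := 'X + c%:P.

Definition fpoly (N r m : nat) (c : int) (i : nat) : {poly int} :=
  if (i < r * m)%N then ((N ^ (m - i %/ r)%N)%:Z)%:P * gpoly c ^+ i
  else gpoly c ^+ i.

(** The point x' = x0 - (P - P~)/s satisfies s g(x') = s x0 + 1 = p0 modulo N,
    because s' inverts s modulo N.  As p0 divides N, it divides s g(x'), and
    since p0 = s x0 + 1 is coprime to s we get p0 | g(x').  Then
    N^(m - i/r) g(x')^i is divisible by p0^(r (m - i/r) + i), and
    r (m - i/r) + i >= r m. *)

From mathcomp Require Import all_boot all_order all_algebra.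
From mathcomp Require Import ring zify.
Set Implicit Arguments. Unset Strict Implicit. Unset Printing Implicit Defensive.
Import Order.TTheory GRing.Theory Num.Theory.
Local Open Scope ring_scope.

Lemma horner_gpolyX (c x : int) (n : nat) : (gpoly c ^+ n).[x] = (x + c) ^+ n.
Proof. by rewrite /gpoly !hornerE. Qed.

Lemma dvdz_mul_cancel_affine (p s x g : int) :
  p = s * x + 1 -> (p %| s * g)%Z -> (p %| g)%Z.
Proof.
move=> ep psg.
have -> : g = g * p - x * (s * g) by rewrite ep; ring.
by rewrite rpredB // dvdz_mull.
Qed.

Lemma eqz_mod_mul_shift (N s s' x k c : int) :
  (s * s' == 1 %[mod N])%Z -> (c == s' + s' * (k * s) %[mod N])%Z ->
  (s * (x - k + c) == s * x + 1 %[mod N])%Z.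
Proof.
rewrite !eqz_mod_dvd => hs hc.
have -> : s * (x - k + c) - (s * x + 1)
        = s * (c - (s' + s' * (k * s))) + (s * s' - 1) * (1 + k * s) by ring.
exact: rpredD (dvdz_mull _ hc) (dvdz_mulr _ hs).
Qed.

Lemma leq_mulB_divn (r m i : nat) : (r * m <= r * (m - i %/ r) + i)%N.
Proof.
have := leq_divM i r; rewrite mulnBr; nia.
Qed.

Lemma dvdz_horner_fpoly (N r m : nat) (c x p : int) (i : nat) :
  (p ^+ r %| N%:Z)%Z -> (p %| x + c)%Z ->
  (p ^+ (r * m) %| (fpoly N r m c i).[x])%Z.
Proof.
move=> pN pg; rewrite /fpoly; case: ifP => [_ | /negbT].
  rewrite hornerCM horner_gpolyX.
  apply: dvdz_trans (dvdz_exp2l p (leq_mulB_divn r m i)) _.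
  rewrite exprD exprM; apply: dvdz_mul; last exact: dvdz_exp2r.
  by rewrite -natz natrX natz dvdz_exp2r.
rewrite -leqNgt horner_gpolyX => rmi.
exact: dvdz_trans (dvdz_exp2l p rmi) (dvdz_exp2r i pg).
Qed.

Theorem claim3p4 (N s : nat) (s' : int) (H P : nat) (Pt c : int)
    (r m d : nat) (p0 x0 : int) :
  coprime N s ->
  1 <= s' <= N%:Z - 1 -> (s%:Z * s' == 1 %[mod N%:Z])%Z ->
  (H < P)%N ->
  0 <= Pt <= s%:Z - 1 -> (Pt == P%:Z %[mod s%:Z])%Z ->
  0 <= c <= N%:Z - 1 -> (c == s' + s' * (P%:Z - Pt) %[mod N%:Z])%Z ->
  P%:Z - H%:Z <= p0 <= P%:Z + H%:Z -> 1 < p0 ->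
  (p0 ^+ r %| N%:Z)%Z -> (p0 == 1 %[mod s%:Z])%Z ->
  p0 = s%:Z * x0 + 1 ->
  forall i : nat, (i < d)%N ->
    (p0 ^+ (r * m) %| (fpoly N r m c i).[x0 - ((P%:Z - Pt) %/ s%:Z)%Z])%Z.
Proof.
move=> _ _ hs' _ _ hPt _ hc _ _ hN _ hp0 i _.
have [-> | r_gt0] := posnP r; first by rewrite mul0n expr0 dvd1z.
set k := ((P%:Z - Pt) %/ s%:Z)%Z.
have ek : k * s%:Z = P%:Z - Pt.
  by apply: divzK; move: hPt; rewrite eqz_mod_dvd -opprB rpredN.
rewrite -ek in hc.
have p0N : (p0 %| N%:Z)%Z.
  by apply: dvdz_trans hN; rewrite -(prednK r_gt0) exprS dvdz_mulr.
have p0_sg : (p0 %| s%:Z * (x0 - k + c))%Z.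
  have := eqz_mod_mul_shift x0 hs' hc; rewrite -hp0 eqz_mod_dvd => Nsg.
  by rewrite -(subrK p0 (_ * _)) rpredD // (dvdz_trans p0N Nsg).
exact/dvdz_horner_fpoly/(dvdz_mul_cancel_affine hp0 p0_sg).
Qed.
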